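(* Let $r\in\mathbb{N}_0$ and $I=[-1,1]$. (i) If $\lambda\in(-1,1)$, then there exists $f\in C^r(I)$ with $f\equiv0$ on $[-1,\lambda]$ such that there is no $g\in C^{r+1}(I)$ satisfying $g^{(i)}(\lambda)=f^{(i)}(\lambda)$ for $0\le i\le\tilde r$ and $g\ge f$ on $(\lambda-\varepsilon,\lambda+\varepsilon)$ for some $\varepsilon>0$, where $\tilde r:=2\lfloor r/2\rfloor$ (i.e. $\tilde r=r-1$ if $r$ is odd and $\tilde r=r$ if $r$ is even). (ii) If $\lambda=\pm1$, then there exists $f\in C^r(I)$ such that there is no $g\in C^{r+1}(I)$ satisfying $g^{(i)}(\lambda)=f^{(i)}(\lambda)$ for $0\le i\le r$ and $g\ge f$ on $(\lambda-\varepsilon,\lambda+\varepsilon)\cap I$ for some $\varepsilon>0$. *)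

From Stdlib Require Import Reals Lra.
Open Scope R_scope.

Definition inI (x : R) : Prop := -1 <= x <= 1.

Definition deriv_on_I (f f' : R -> R) : Prop :=
  forall x, inI x -> forall eps, 0 < eps -> exists delta, 0 < delta /\
    forall y, inI y -> y <> x -> Rabs (y - x) < delta ->
      Rabs ((f y - f x) / (y - x) - f' x) < eps.

Definition cont_on_I (f : R -> R) : Prop :=
  forall x, inI x -> forall eps, 0 < eps -> exists delta, 0 < delta /\
    forall y, inI y -> Rabs (y - x) < delta -> Rabs (f y - f x) < eps.

(* D is a family of derivatives witnessing f in C^r(I):
   D 0 = f on I, D (i+1) is the derivative of D i on I for i < r,
   and D r is continuous on I.  Then D i = f^(i) on I for i <= r. *)
Definition Cr_derivs (r : nat) (f : R -> R) (D : nat -> R -> R) : Prop :=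
  (forall x, inI x -> D 0%nat x = f x) /\
  (forall i, (i < r)%nat -> deriv_on_I (D i) (D (S i))) /\
  cont_on_I (D r).

Definition Cr (r : nat) (f : R -> R) : Prop := exists D, Cr_derivs r f D.

From Stdlib Require Import Reals Arith Lra Lia.
Open Scope R_scope.

(* The witness is [f x = (s (x - lam))_+ ^ (r + 1/2)] with [s = 1] or [s = -1]; its
   derivatives of order [<= r] all vanish at [lam].  If the derivatives of a C^(r+1)
   function [g] of order [<= r] vanish at [lam], the iterated mean value theorem gives
   [|g x| <= M |x - lam| ^ (r + 1)] near [lam], which cannot dominate [t ^ (r + 1/2)].
   At an interior point with [r] odd only the derivatives of order [< r] are matched:
   if [g^(r) lam > 0] then [g] has the sign of [(x - lam) ^ r], so [g < 0 = f] just left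
   of [lam]; if [g^(r) lam <= 0] the one-sided bound [g x <= M (x - lam) ^ (r + 1)] still
   holds just right of [lam]. *)

Lemma continuity_sqrt : continuity sqrt.
Proof.
  intro x; destruct (Rle_lt_dec 0 x) as [Hx|Hx]; [now apply continuity_pt_sqrt|].
  apply (continuity_pt_locally_ext (fct_cte 0) sqrt (- x)); [lra| |].
  - intros y Hy; unfold Rdist in Hy; apply Rabs_def2 in Hy.
    unfold fct_cte; rewrite sqrt_neg_0; lra.
  - apply continuity_const; intros ??; reflexivity.
Qed.

Lemma cont_on_I_of_continuity (u : R -> R) : continuity u -> cont_on_I u.
Proof.
  intros Hu x _ eps Heps; destruct (Hu x eps Heps) as [d [Hd Hy]].
  exists d; split; [exact Hd|]; intros y _ Hyx.
  destruct (Req_dec y x) as [->|Hne].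
  - rewrite Rminus_diag, Rabs_R0; exact Heps.
  - apply (Hy y); split; [split; [exact I | congruence] | exact Hyx].
Qed.

Lemma deriv_on_I_of_derivable_pt_lim (u u' : R -> R) :
  (forall x, derivable_pt_lim u x (u' x)) -> deriv_on_I u u'.
Proof.
  intros Hu x _ eps Heps; destruct (Hu x eps Heps) as [d Hd].
  exists d; split; [apply cond_pos|]; intros y _ Hne Hyx.
  specialize (Hd (y - x)); replace (x + (y - x)) with y in Hd by ring.
  apply Hd; [lra | exact Hyx].
Qed.

Lemma inI_exists_near (x d : R) : inI x -> 0 < d ->
  exists y, inI y /\ y <> x /\ Rabs (y - x) < d.
Proof.
  unfold inI; intros Hx Hd; set (h := Rmin 1 d / 2).
  assert (0 < h < d /\ h <= 1 / 2) by (unfold h; unfold Rmin; destruct Rle_dec; lra).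
  destruct (Rle_dec x 0).
  - exists (x + h); replace (x + h - x) with h by ring.
    rewrite Rabs_right by lra; repeat split; lra.
  - exists (x - h); replace (x - h - x) with (- h) by ring.
    rewrite Rabs_Ropp, Rabs_right by lra; repeat split; lra.
Qed.

Lemma deriv_on_I_unique (u u' v v' : R -> R) :
  deriv_on_I u u' -> deriv_on_I v v' -> (forall x, inI x -> u x = v x) ->
  forall x, inI x -> u' x = v' x.
Proof.
  intros Hu Hv Euv x Hx.
  destruct (Req_dec (u' x) (v' x)) as [|Hne]; [assumption|exfalso].
  set (e := Rabs (u' x - v' x) / 2).
  assert (He : 0 < e) by (unfold e; pose proof (Rabs_pos_lt (u' x - v' x) ltac:(lra)); lra).
  destruct (Hu x Hx e He) as [d1 [Hd1 Hq1]], (Hv x Hx e He) as [d2 [Hd2 Hq2]].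
  destruct (inI_exists_near x (Rmin d1 d2) Hx (Rmin_glb_lt _ _ _ Hd1 Hd2))
    as [y [Hy [Hyx Hyd]]].
  specialize (Hq1 y Hy Hyx (Rlt_le_trans _ _ _ Hyd (Rmin_l _ _))).
  specialize (Hq2 y Hy Hyx (Rlt_le_trans _ _ _ Hyd (Rmin_r _ _))).
  rewrite (Euv y Hy), (Euv x Hx) in Hq1.
  set (q := (v y - v x) / (y - x)) in *.
  assert (Rabs (u' x - v' x) <= Rabs (q - u' x) + Rabs (q - v' x)).
  { replace (u' x - v' x) with ((q - v' x) - (q - u' x)) by ring.
    eapply Rle_trans; [apply Rabs_triang|]; rewrite Rabs_Ropp; lra. }
  unfold e in *; lra.
Qed.

Lemma Cr_derivs_unique (r : nat) (f : R -> R) (D1 D2 : nat -> R -> R) :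
  Cr_derivs r f D1 -> Cr_derivs r f D2 ->
  forall i, (i <= r)%nat -> forall x, inI x -> D1 i x = D2 i x.
Proof.
  intros [H01 [Hd1 _]] [H02 [Hd2 _]]; induction i as [|i IH]; intros Hi x Hx.
  - rewrite H01, H02 by exact Hx; reflexivity.
  - apply (deriv_on_I_unique (D1 i) _ (D2 i)); [apply Hd1; lia | apply Hd2; lia | | exact Hx].
    intros y Hy; apply IH; [lia | exact Hy].
Qed.

Lemma deriv_on_I_cont (u u' : R -> R) : deriv_on_I u u' -> cont_on_I u.
Proof.
  intros Hu x Hx eps Heps; destruct (Hu x Hx 1 ltac:(lra)) as [d [Hd Hq]].
  set (K := Rabs (u' x) + 1).
  assert (HK : 0 < K) by (pose proof (Rabs_pos (u' x)); unfold K; lra).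
  exists (Rmin d (eps / K)); split; [apply Rmin_glb_lt; [lra | apply Rdiv_lt_0_compat; lra]|].
  intros y Hy Hyx; destruct (Req_dec y x) as [->|Hne].
  { rewrite Rminus_diag, Rabs_R0; exact Heps. }
  assert (Hslope : Rabs ((u y - u x) / (y - x)) <= K).
  { specialize (Hq y Hy Hne (Rlt_le_trans _ _ _ Hyx (Rmin_l _ _))).
    replace ((u y - u x) / (y - x)) with (((u y - u x) / (y - x) - u' x) + u' x) by ring.
    eapply Rle_trans; [apply Rabs_triang|]; unfold K; lra. }
  assert (Hyx' : Rabs (y - x) * K < eps).
  { apply (Rmult_lt_reg_r (/ K)); [apply Rinv_0_lt_compat; exact HK|].
    replace (Rabs (y - x) * K * / K) with (Rabs (y - x)) by (field; lra).
    exact (Rlt_le_trans _ _ _ Hyx (Rmin_r _ _)). }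
  replace (u y - u x) with ((u y - u x) / (y - x) * (y - x)) by (field; lra).
  rewrite Rabs_mult; pose proof (Rabs_pos (y - x)); nra.
Qed.

Lemma cont_on_I_locally_bounded (u : R -> R) (lam : R) : cont_on_I u -> inI lam ->
  exists d M, 0 < d /\ 0 <= M /\ forall x, inI x -> Rabs (x - lam) < d -> Rabs (u x) <= M.
Proof.
  intros Hu Hl; destruct (Hu lam Hl 1 ltac:(lra)) as [d [Hd Hy]].
  exists d, (Rabs (u lam) + 1); split; [exact Hd|]; split; [pose proof (Rabs_pos (u lam)); lra|].
  intros x Hx Hxd; specialize (Hy x Hx Hxd).
  replace (u x) with ((u x - u lam) + u lam) by ring.
  eapply Rle_trans; [apply Rabs_triang | lra].
Qed.

Definition clamp (x : R) : R := Rmax (-1) (Rmin x 1).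

Lemma clamp_inI x : inI (clamp x).
Proof. unfold clamp, inI, Rmax, Rmin; repeat destruct Rle_dec; lra. Qed.

Lemma clamp_id x : inI x -> clamp x = x.
Proof. unfold clamp, inI, Rmax, Rmin; repeat destruct Rle_dec; lra. Qed.

Lemma clamp_lipschitz x y : Rabs (clamp y - clamp x) <= Rabs (y - x).
Proof. unfold clamp, Rmax, Rmin, Rabs; repeat destruct Rle_dec; repeat destruct Rcase_abs; lra. Qed.

(* [deriv_on_I] is one-sided at [-1] and [1], while Stdlib's [MVT] needs two-sided continuity at
   the endpoints; [u (clamp x)] provides it. *)
Lemma deriv_on_I_MVT (u u' : R -> R) (a b : R) : deriv_on_I u u' -> inI a -> inI b -> a < b ->
  exists c, a < c < b /\ u b - u a = u' c * (b - a).
Proof.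
  intros Hu Ha Hb Hab; set (h := fun x => u (clamp x)).
  assert (Hder : forall c, a < c < b -> derivable_pt_lim h c (u' c)).
  { intros c Hc eps He; unfold inI in *.
    destruct (Hu c ltac:(unfold inI; lra) eps He) as [d [Hd Hq]].
    assert (Hm : 0 < Rmin d (Rmin (c - a) (b - c))) by (repeat apply Rmin_glb_lt; lra).
    exists (mkposreal _ Hm); intros k Hk0 Hk; simpl in Hk.
    pose proof (Rmin_l d (Rmin (c - a) (b - c))); pose proof (Rmin_r d (Rmin (c - a) (b - c))).
    pose proof (Rmin_l (c - a) (b - c)); pose proof (Rmin_r (c - a) (b - c)).
    apply Rabs_def2 in Hk as Hk'.
    unfold h; rewrite !clamp_id by (unfold inI; lra).
    specialize (Hq (c + k) ltac:(unfold inI; lra) ltac:(lra)).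
    replace (c + k - c) with k in Hq by ring; apply Hq; lra. }
  assert (Hcont : forall c, a <= c <= b -> continuity_pt h c).
  { intros c Hc eps He; assert (HcI : inI c) by (unfold inI in *; lra).
    destruct (deriv_on_I_cont u u' Hu c HcI eps He) as [d [Hd Hy]].
    exists d; split; [exact Hd|]; intros y [_ Hyd]; simpl in *; unfold R_dist in *.
    unfold h; rewrite (clamp_id c HcI); apply Hy; [apply clamp_inI|].
    pose proof (clamp_lipschitz c y) as L; rewrite (clamp_id c HcI) in L; lra. }
  destruct (MVT h id a b (fun c Hc => exist _ (u' c) (Hder c Hc))
             (fun c _ => derivable_pt_id c) Hab Hcont
             (fun c _ => derivable_continuous_pt _ _ (derivable_pt_id c))) as [c [Hc E]].
  exists c; split; [exact Hc|]; simpl in E; rewrite derive_pt_id in E; unfold id, h in E.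
  rewrite !clamp_id in E by assumption; lra.
Qed.
(* [t ^ (n + 1/2)] for [t >= 0], and [0] for [t <= 0] since [sqrt] vanishes on negatives. *)
Definition half_pow (n : nat) (t : R) : R := t ^ n * sqrt t.

Lemma half_pow_nonpos n t : t <= 0 -> half_pow n t = 0.
Proof. intros Ht; unfold half_pow; rewrite sqrt_neg_0 by exact Ht; ring. Qed.

Lemma half_pow_continuity n : continuity (half_pow n).
Proof.
  intro t; apply continuity_pt_mult; [|apply continuity_sqrt].
  apply derivable_continuous_pt, derivable_pt_pow.
Qed.

Lemma half_pow_derivable_pt_lim n t :
  derivable_pt_lim (half_pow (S n)) t ((INR n + 3 / 2) * half_pow n t).
Proof.
  destruct (Rtotal_order t 0) as [Hneg|[->|Hpos]].
  - rewrite half_pow_nonpos, Rmult_0_r by lra.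
    apply (derivable_pt_lim_locally_ext (fct_cte 0) _ t (t - 1) 0); [lra| |apply derivable_pt_lim_const].
    intros z Hz; unfold fct_cte; rewrite half_pow_nonpos by lra; reflexivity.
  - (* at [0] the difference quotient is [half_pow n h] *)
    intros eps He; destruct (half_pow_continuity n 0 eps He) as [d [Hd Hy]].
    exists (mkposreal d Hd); intros h Hh0 Hh; simpl in Hh.
    specialize (Hy h); simpl in Hy; unfold Rdist in Hy; rewrite !Rminus_0_r in Hy.
    specialize (Hy (conj (conj I (not_eq_sym Hh0)) Hh)).
    rewrite (half_pow_nonpos n 0), Rminus_0_r in Hy by lra.
    rewrite Rplus_0_l, !(half_pow_nonpos _ 0), Rmult_0_r, !Rminus_0_r by lra.
    replace (half_pow (S n) h / h) with (half_pow n h) by (unfold half_pow; simpl; field; exact Hh0).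
    exact Hy.
  - assert (Hs : 0 < sqrt t) by (apply sqrt_lt_R0; exact Hpos).
    replace ((INR n + 3 / 2) * half_pow n t)
      with (INR (S n) * t ^ Init.Nat.pred (S n) * sqrt t + t ^ S n * / (2 * sqrt t)).
    + apply (derivable_pt_lim_mult (fun y => y ^ S n) sqrt);
        [apply derivable_pt_lim_pow | apply derivable_pt_lim_sqrt; exact Hpos].
    + unfold half_pow; simpl Init.Nat.pred; rewrite S_INR; simpl pow.
      replace (t * t ^ n) with (sqrt t * sqrt t * t ^ n) by (rewrite sqrt_sqrt by lra; ring).
      field; lra.
Qed.
Lemma derivable_pt_lim_affine (s lam x : R) : derivable_pt_lim (fun y => s * (y - lam)) x s.
Proof.
  intros eps He; exists (mkposreal 1 ltac:(lra)); intros h Hh _.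
  replace ((s * (x + h - lam) - s * (x - lam)) / h - s) with 0 by (field; exact Hh).
  rewrite Rabs_R0; exact He.
Qed.

Section CutPow.

Variables (s lam : R) (r : nat).

Definition cut_pow (x : R) : R := half_pow r (s * (x - lam)).

Fixpoint cut_pow_coef (i : nat) : R :=
  match i with
  | O => 1
  | S j => cut_pow_coef j * s * (INR (r - S j) + 3 / 2)
  end.

Definition cut_pow_derivs (i : nat) (x : R) : R :=
  cut_pow_coef i * half_pow (r - i) (s * (x - lam)).

Lemma cut_pow_Cr_derivs : Cr_derivs r cut_pow cut_pow_derivs.
Proof.
  split; [|split].
  - intros x _; unfold cut_pow_derivs, cut_pow; simpl; rewrite Nat.sub_0_r; ring.
  - intros i Hi; apply deriv_on_I_of_derivable_pt_lim; intros x; unfold cut_pow_derivs.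
    replace (r - i)%nat with (S (r - S i)) by lia; simpl cut_pow_coef.
    replace (cut_pow_coef i * s * (INR (r - S i) + 3 / 2) * half_pow (r - S i) (s * (x - lam)))
      with (cut_pow_coef i * ((INR (r - S i) + 3 / 2) * half_pow (r - S i) (s * (x - lam)) * s))
      by ring.
    apply derivable_pt_lim_scal.
    apply (derivable_pt_lim_comp (fun y => s * (y - lam)) (half_pow (S (r - S i))));
      [apply derivable_pt_lim_affine | apply half_pow_derivable_pt_lim].
  - apply cont_on_I_of_continuity; intros x; unfold cut_pow_derivs.
    apply continuity_pt_scal.
    apply (continuity_pt_comp (fun y => s * (y - lam)) (half_pow (r - r)));
      [apply derivable_continuous_pt; exists s; apply derivable_pt_lim_affine
      | apply half_pow_continuity].
Qed.

Lemma cut_pow_nonpos x : s * (x - lam) <= 0 -> cut_pow x = 0.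
Proof. apply half_pow_nonpos. Qed.

Lemma Cr_derivs_cut_pow_vanish (Df : nat -> R -> R) : inI lam -> Cr_derivs r cut_pow Df ->
  forall i, (i <= r)%nat -> Df i lam = 0.
Proof.
  intros Hl HDf i Hi.
  rewrite (Cr_derivs_unique r cut_pow Df cut_pow_derivs HDf cut_pow_Cr_derivs i Hi lam Hl).
  unfold cut_pow_derivs; rewrite Rminus_diag, Rmult_0_r, half_pow_nonpos by lra; ring.
Qed.

End CutPow.
Lemma abs_le_pow_of_deriv (u u' : R -> R) (lam d K : R) (j : nat) :
  deriv_on_I u u' -> inI lam -> u lam = 0 -> 0 <= K ->
  (forall x, inI x -> Rabs (x - lam) < d -> Rabs (u' x) <= K * Rabs (x - lam) ^ j) ->
  forall x, inI x -> Rabs (x - lam) < d -> Rabs (u x) <= K * Rabs (x - lam) ^ S j.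
Proof.
  intros Hu Hl H0 HK Hb x Hx Hxd.
  assert (Hc : exists c, inI c /\ Rabs (c - lam) <= Rabs (x - lam) /\ u x = u' c * (x - lam)).
  { unfold inI in *; destruct (Rtotal_order x lam) as [Hlt|[->|Hgt]].
    - destruct (deriv_on_I_MVT u u' x lam Hu Hx Hl Hlt) as [c [Hc E]].
      exists c; rewrite !Rabs_left by lra; unfold inI; repeat split; lra.
    - exists lam; rewrite H0, Rminus_diag; repeat split; lra.
    - destruct (deriv_on_I_MVT u u' lam x Hu Hl Hx Hgt) as [c [Hc E]].
      exists c; rewrite !Rabs_right by lra; unfold inI; repeat split; lra. }
  destruct Hc as [c [HcI [Hcx ->]]].
  rewrite Rabs_mult, <- tech_pow_Rmult, (Rmult_comm (Rabs (x - lam))), <- Rmult_assoc.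
  apply Rmult_le_compat_r; [apply Rabs_pos|].
  eapply Rle_trans; [apply Hb; [exact HcI | lra]|].
  apply Rmult_le_compat_l; [exact HK|]; apply pow_incr; split; [apply Rabs_pos | exact Hcx].
Qed.

Lemma le_pow_right_of_deriv (u u' : R -> R) (lam d K : R) (j : nat) :
  deriv_on_I u u' -> inI lam -> u lam <= 0 -> 0 <= K ->
  (forall x, inI x -> lam <= x -> x - lam < d -> u' x <= K * (x - lam) ^ j) ->
  forall x, inI x -> lam <= x -> x - lam < d -> u x <= K * (x - lam) ^ S j.
Proof.
  intros Hu Hl H0 HK Hb x Hx Hlx Hxd.
  destruct (Rle_lt_or_eq_dec _ _ Hlx) as [Hgt|<-].
  - destruct (deriv_on_I_MVT u u' lam x Hu Hl Hx Hgt) as [c [Hc E]].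
    assert (Hc' : u' c <= K * (x - lam) ^ j).
    { eapply Rle_trans; [apply Hb; unfold inI in *; [lra | lra | lra]|].
      apply Rmult_le_compat_l; [exact HK | apply pow_incr; lra]. }
    assert (u' c * (x - lam) <= K * (x - lam) ^ j * (x - lam)) by (apply Rmult_le_compat_r; lra).
    rewrite <- tech_pow_Rmult.
    replace (K * ((x - lam) * (x - lam) ^ j)) with (K * (x - lam) ^ j * (x - lam)) by ring; lra.
  - rewrite Rminus_diag, pow_i by lia; lra.
Qed.

Lemma sign_left_of_deriv (u u' : R -> R) (lam d sg : R) :
  deriv_on_I u u' -> inI lam -> u lam = 0 ->
  (forall x, inI x -> lam - d < x < lam -> sg * u' x > 0) ->
  forall x, inI x -> lam - d < x < lam -> - sg * u x > 0.
Proof.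
  intros Hu Hl H0 Hb x Hx Hxd.
  destruct (deriv_on_I_MVT u u' x lam Hu Hx Hl ltac:(lra)) as [c [Hc E]].
  assert (Hcb := Hb c ltac:(unfold inI in *; lra) ltac:(lra)).
  replace (u x) with (- (u' c * (lam - x))) by lra.
  replace (- sg * - (u' c * (lam - x))) with (sg * u' c * (lam - x)) by ring.
  apply Rmult_gt_0_compat; lra.
Qed.

Definition deriv_chain (n : nat) (D : nat -> R -> R) : Prop :=
  forall i, (i < n)%nat -> deriv_on_I (D i) (D (S i)).

Lemma deriv_chain_shift n D : deriv_chain (S n) D -> deriv_chain n (fun i => D (S i)).
Proof. intros HD i Hi; apply HD; lia. Qed.

Section DerivChain.

Variables (lam : R) (Hlam : inI lam).

Lemma deriv_chain_abs_bound n D d M : deriv_chain n D -> 0 <= M ->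
  (forall i, (i < n)%nat -> D i lam = 0) ->
  (forall x, inI x -> Rabs (x - lam) < d -> Rabs (D n x) <= M) ->
  forall x, inI x -> Rabs (x - lam) < d -> Rabs (D 0%nat x) <= M * Rabs (x - lam) ^ n.
Proof.
  revert D; induction n as [|n IH]; intros D HD HM H0 Hn.
  - intros x Hx Hxd; rewrite pow_O, Rmult_1_r; apply Hn; assumption.
  - apply (abs_le_pow_of_deriv _ (D 1%nat)); [apply HD; lia | exact Hlam | apply H0; lia | exact HM |].
    apply (IH (fun i => D (S i))); [apply deriv_chain_shift, HD | exact HM | |exact Hn].
    intros i Hi; apply H0; lia.
Qed.

Lemma deriv_chain_le_pow_right n D d M : deriv_chain n D -> 0 <= M ->
  (forall i, (i < n)%nat -> D i lam <= 0) ->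
  (forall x, inI x -> lam <= x -> x - lam < d -> D n x <= M) ->
  forall x, inI x -> lam <= x -> x - lam < d -> D 0%nat x <= M * (x - lam) ^ n.
Proof.
  revert D; induction n as [|n IH]; intros D HD HM H0 Hn.
  - intros x Hx Hlx Hxd; rewrite pow_O, Rmult_1_r; apply Hn; assumption.
  - apply (le_pow_right_of_deriv _ (D 1%nat)); [apply HD; lia | exact Hlam | apply H0; lia | exact HM |].
    apply (IH (fun i => D (S i))); [apply deriv_chain_shift, HD | exact HM | |exact Hn].
    intros i Hi; apply H0; lia.
Qed.

Lemma deriv_chain_sign_left n D d :  deriv_chain n D ->
  (forall i, (i < n)%nat -> D i lam = 0) ->
  (forall x, inI x -> lam - d < x < lam -> D n x > 0) ->
  forall x, inI x -> lam - d < x < lam -> (-1) ^ n * D 0%nat x > 0.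
Proof.
  revert D; induction n as [|n IH]; intros D HD H0 Hn.
  - intros x Hx Hxd; rewrite pow_O, Rmult_1_l; apply Hn; assumption.
  - intros x Hx Hxd; replace ((-1) ^ S n) with (- (-1) ^ n) by (simpl; ring).
    apply (sign_left_of_deriv _ (D 1%nat) lam d); [apply HD; lia | exact Hlam | apply H0; lia | | exact Hx | exact Hxd].
    apply (IH (fun i => D (S i))); [apply deriv_chain_shift, HD | |exact Hn].
    intros i Hi; apply H0; lia.
Qed.

End DerivChain.

Lemma half_pow_not_dominated (r : nat) (M tau : R) : 0 < tau -> 0 <= M ->
  ~ (forall t, 0 < t < tau -> half_pow r t <= M * t ^ S r).
Proof.
  intros Htau HM Hdom.
  set (a := / (2 * (M + 1))).
  assert (Ha : 0 < a) by (unfold a; apply Rinv_0_lt_compat; lra).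
  assert (HMa : M * a < 1) by (unfold a; apply (Rmult_lt_reg_r (2 * (M + 1))); [lra | field_simplify; lra]).
  set (t := Rmin (tau / 2) (a * a)).
  assert (Ht : 0 < t < tau) by (unfold t, Rmin; destruct Rle_dec; nra).
  assert (Hsa : sqrt t <= a).
  { rewrite <- (sqrt_square a) by lra; apply sqrt_le_1_alt; apply Rmin_r. }
  assert (Hs : 0 < sqrt t) by (apply sqrt_lt_R0; lra).
  assert (Htr : 0 < t ^ r) by (apply pow_lt; lra).
  specialize (Hdom t Ht); unfold half_pow in Hdom; rewrite <- tech_pow_Rmult in Hdom.
  rewrite <- (sqrt_sqrt t) in Hdom at 3 by lra.
  (* [t ^ r sqrt t <= M t ^ r sqrt t sqrt t] forces [1 <= M sqrt t <= M a < 1]. *)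
  assert (1 <= M * sqrt t).
  { apply (Rmult_le_reg_l (t ^ r * sqrt t)); [nra|].
    replace (t ^ r * sqrt t * (M * sqrt t)) with (M * (sqrt t * sqrt t * t ^ r)) by ring; lra. }
  nra.
Qed.

Lemma flat_Cr_not_above_cut_pow (r : nat) (g : R -> R) (Dg : nat -> R -> R) (lam s tau eps : R) :
  Cr_derivs (S r) g Dg -> inI lam -> s = 1 \/ s = -1 -> 0 < tau ->
  (forall t, 0 < t < tau -> inI (lam + s * t)) ->
  (forall i, (i <= r)%nat -> Dg i lam = 0) -> 0 < eps ->
  ~ (forall x, inI x -> lam - eps < x < lam + eps -> g x >= cut_pow s lam r x).
Proof.
  intros [H0 [HD Hcont]] Hl Hs Htau HtI Hz He Hge.
  destruct (cont_on_I_locally_bounded _ lam Hcont Hl) as [d [M [Hd [HM Hb]]]].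
  apply (half_pow_not_dominated r M (Rmin tau (Rmin d eps))); [repeat apply Rmin_glb_lt; lra | exact HM |].
  intros t Ht.
  pose proof (Rmin_l tau (Rmin d eps)); pose proof (Rmin_r tau (Rmin d eps)).
  pose proof (Rmin_l d eps); pose proof (Rmin_r d eps).
  set (x := lam + s * t).
  assert (Hx : inI x) by (apply HtI; lra).
  assert (Hst : s * (x - lam) = t) by (unfold x; destruct Hs as [-> | ->]; ring).
  assert (Hxl : Rabs (x - lam) = t).
  { unfold x; replace (lam + s * t - lam) with (s * t) by ring.
    destruct Hs as [-> | ->]; [rewrite Rmult_1_l | replace (-1 * t) with (- t) by ring; rewrite Rabs_Ropp];
      apply Rabs_right; lra. }
  assert (Hup := deriv_chain_abs_bound lam Hl (S r) Dg d M HD HM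
                   ltac:(intros i Hi; apply Hz; lia) Hb x Hx ltac:(lra)).
  rewrite H0, Hxl in Hup by exact Hx.
  assert (Hlow := Hge x Hx ltac:(unfold x; destruct Hs as [-> | ->]; lra)).
  unfold cut_pow in Hlow; rewrite Hst in Hlow.
  pose proof (Rle_abs (g x)); lra.
Qed.

Lemma nonpos_derivs_not_above_cut_pow (r : nat) (g : R -> R) (Dg : nat -> R -> R) (lam eps : R) :
  Cr_derivs (S r) g Dg -> -1 <= lam < 1 ->
  (forall i, (i <= r)%nat -> Dg i lam <= 0) -> 0 < eps ->
  ~ (forall x, inI x -> lam - eps < x < lam + eps -> g x >= cut_pow 1 lam r x).
Proof.
  intros [H0 [HD Hcont]] Hl Hz He Hge.
  assert (HlI : inI lam) by (unfold inI; lra).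
  destruct (cont_on_I_locally_bounded _ lam Hcont HlI) as [d [M [Hd [HM Hb]]]].
  apply (half_pow_not_dominated r M (Rmin (1 - lam) (Rmin d eps)));
    [repeat apply Rmin_glb_lt; lra | exact HM |].
  intros t Ht.
  pose proof (Rmin_l (1 - lam) (Rmin d eps)); pose proof (Rmin_r (1 - lam) (Rmin d eps)).
  pose proof (Rmin_l d eps); pose proof (Rmin_r d eps).
  assert (Hx : inI (lam + t)) by (unfold inI; lra).
  assert (Hup := deriv_chain_le_pow_right lam HlI (S r) Dg d M HD HM
                   ltac:(intros i Hi; apply Hz; lia)).
  specialize (Hup ltac:(intros y Hy Hly Hyd; eapply Rle_trans; [apply Rle_abs | apply Hb; [exact Hy | rewrite Rabs_right; lra]])
                (lam + t) Hx ltac:(lra) ltac:(lra)).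
  rewrite H0 in Hup by exact Hx.
  assert (Hlow := Hge (lam + t) Hx ltac:(lra)).
  unfold cut_pow in Hlow; replace (1 * (lam + t - lam)) with t in Hlow by ring.
  replace (lam + t - lam) with t in Hup by ring; lra.
Qed.

Lemma odd_pos_deriv_not_above_cut_pow (r : nat) (g : R -> R) (Dg : nat -> R -> R) (lam eps : R) :
  Nat.Odd r -> Cr_derivs (S r) g Dg -> -1 < lam <= 1 ->
  (forall i, (i < r)%nat -> Dg i lam = 0) -> 0 < Dg r lam -> 0 < eps ->
  ~ (forall x, inI x -> lam - eps < x < lam + eps -> g x >= cut_pow 1 lam r x).
Proof.
  intros [k ->] [H0 [HD _]] Hl Hz Hpos He Hge.
  set (r := (2 * k + 1)%nat) in *.
  assert (HlI : inI lam) by (unfold inI; lra).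
  destruct (deriv_on_I_cont _ _ (HD r ltac:(lia)) lam HlI (Dg r lam) Hpos) as [d [Hd Hnear]].
  pose proof (Rmin_l d (Rmin eps (lam + 1))); pose proof (Rmin_r d (Rmin eps (lam + 1))).
  pose proof (Rmin_l eps (lam + 1)); pose proof (Rmin_r eps (lam + 1)).
  assert (Hm : 0 < Rmin d (Rmin eps (lam + 1))) by (repeat apply Rmin_glb_lt; lra).
  set (m := Rmin d (Rmin eps (lam + 1))) in *.
  set (x := lam - m / 2).
  assert (Hx : inI x) by (unfold x, inI; lra).
  assert (Hsign := deriv_chain_sign_left lam HlI r Dg m ltac:(intros i Hi; apply HD; lia) Hz).
  specialize (Hsign ltac:(intros y Hy Hyl; specialize (Hnear y Hy ltac:(rewrite Rabs_left; lra));
                          apply Rabs_def2 in Hnear; lra)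
                x Hx ltac:(unfold x; lra)).
  rewrite H0 in Hsign by exact Hx.
  replace ((-1) ^ r) with (-1) in Hsign by (unfold r; rewrite Nat.add_1_r; symmetry; apply pow_1_odd).
  assert (Hlow := Hge x Hx ltac:(unfold x; lra)).
  rewrite cut_pow_nonpos in Hlow by (unfold x; lra); lra.
Qed.

Theorem lemma3p1 (r : nat) :
  (* (i) interior points, rt = 2 * floor (r/2) *)
  (forall lam, -1 < lam < 1 ->
    exists f, Cr r f /\ (forall x, -1 <= x <= lam -> f x = 0) /\
      forall Df, Cr_derivs r f Df ->
      ~ (exists g Dg, Cr_derivs (S r) g Dg /\
           (forall i, (i <= 2 * (r / 2))%nat -> Dg i lam = Df i lam) /\
           exists eps, 0 < eps /\
             forall x, inI x -> lam - eps < x < lam + eps -> g x >= f x)) /\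
  (* (ii) endpoints *)
  (forall lam, lam = -1 \/ lam = 1 ->
    exists f, Cr r f /\
      forall Df, Cr_derivs r f Df ->
      ~ (exists g Dg, Cr_derivs (S r) g Dg /\
           (forall i, (i <= r)%nat -> Dg i lam = Df i lam) /\
           exists eps, 0 < eps /\
             forall x, inI x -> lam - eps < x < lam + eps -> g x >= f x)).
Proof.
  split.
  - intros lam Hl; assert (HlI : inI lam) by (unfold inI; lra).
    exists (cut_pow 1 lam r); split; [exists (cut_pow_derivs 1 lam r); apply cut_pow_Cr_derivs|].
    split; [intros x Hx; apply cut_pow_nonpos; lra|].
    intros Df HDf [g [Dg [Hg [Hmatch [eps [He Hge]]]]]].
    pose proof (Nat.div_mod_eq r 2); pose proof (Nat.mod_upper_bound r 2 ltac:(lia)).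
    assert (Hz : forall i, (i < r)%nat -> Dg i lam = 0).
    { intros i Hi; rewrite Hmatch by lia; apply (Cr_derivs_cut_pow_vanish 1 lam r Df HlI HDf); lia. }
    destruct (Rle_lt_dec (Dg r lam) 0) as [Hnonpos|Hpos].
    + apply (nonpos_derivs_not_above_cut_pow r g Dg lam eps Hg ltac:(lra)); [|exact He|exact Hge].
      intros i Hi; destruct (Nat.eq_dec i r) as [->|Hne]; [exact Hnonpos | rewrite Hz by lia; lra].
    + destruct (Nat.Even_or_Odd r) as [[k Hk]|Hodd].
      * assert (Dg r lam = 0) by (rewrite Hmatch by lia; apply (Cr_derivs_cut_pow_vanish 1 lam r Df HlI HDf); lia).
        lra.
      * exact (odd_pos_deriv_not_above_cut_pow r g Dg lam eps Hodd Hg ltac:(lra) Hz Hpos He Hge).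
  - intros lam Hl; assert (HlI : inI lam) by (unfold inI; lra).
    set (s := if Rle_dec lam 0 then 1 else -1).
    assert (Hs : s = 1 \/ s = -1) by (unfold s; destruct Rle_dec; auto).
    assert (Hinside : forall t, 0 < t < 2 -> inI (lam + s * t)).
    { intros t Ht; unfold s, inI; destruct Rle_dec; destruct Hl; subst; lra. }
    exists (cut_pow s lam r); split; [exists (cut_pow_derivs s lam r); apply cut_pow_Cr_derivs|].
    intros Df HDf [g [Dg [Hg [Hmatch [eps [He Hge]]]]]].
    apply (flat_Cr_not_above_cut_pow r g Dg lam s 2 eps Hg HlI Hs ltac:(lra) Hinside); [|exact He|exact Hge].
    intros i Hi; rewrite Hmatch by exact Hi; exact (Cr_derivs_cut_pow_vanish s lam r Df HlI HDf i Hi).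
Qed.
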